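(* Let $\mathbb{F}$ be a field, $p,q\in\mathbb{F}[t]$ monic of degree $2$, $\mathcal{W}_{p,q}=\mathbb{F}\langle a,b\rangle/(p(a),q(b))$. Let $\gamma\in\mathcal{W}_{p,q}^\times$ and let $x\in(\mathbb{F}[a]\cup\mathbb{F}[b])\setminus\mathbb{F}$ be a nonscalar basic vector. If $\gamma x\gamma^{-1}$ is basic (i.e. lies in $\mathbb{F}[a]\cup\mathbb{F}[b]$), then $\gamma x\gamma^{-1}=x$.
   Context: $\mathcal{W}_{p,q}$ is the quotient of the free associative unital $\mathbb{F}$-algebra on two noncommuting generators by the two-sided ideal generated by $p(a)$ and $q(b)$; $\mathbb{F}[a]$ and $\mathbb{F}[b]$ are $2$-dimensional subalgebras. *)

From HB Require Import structures.
From mathcomp Require Import all_boot all_order all_algebra.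
Set Implicit Arguments. Unset Strict Implicit. Unset Printing Implicit Defensive.
Import GRing.Theory.
Local Open Scope ring_scope.

Definition peval (F : fieldType) (A : algType F) (r : {poly F}) (x : A) : A :=
  (map_poly (in_alg A) r).[x].

(* (A, a, b) is W_{p,q} = F<a,b>/(p(a), q(b)), characterised (up to unique
   isomorphism) by its universal property among F-algebras. *)
Definition is_Wpq (F : fieldType) (p q : {poly F}) (A : algType F) (a b : A) : Prop :=
  peval p a = 0 /\ peval q b = 0 /\
  forall (B : algType F) (a' b' : B), peval p a' = 0 -> peval q b' = 0 ->
    exists f : {lrmorphism A -> B},
      [/\ f a = a', f b = b' &
          forall g : {lrmorphism A -> B}, g a = a' -> g b = b' -> forall y, g y = f y].

Definition in_Fx (F : fieldType) (A : algType F) (x y : A) : Prop :=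
  exists r : {poly F}, y = peval r x.

Definition is_scalar (F : fieldType) (A : algType F) (y : A) : Prop :=
  exists c : F, y = c%:A.

Definition basic (F : fieldType) (A : algType F) (a b y : A) : Prop :=
  in_Fx a y \/ in_Fx b y.

From HB Require Import structures.
From mathcomp Require Import all_boot all_order all_algebra.
Set Implicit Arguments. Unset Strict Implicit. Unset Printing Implicit Defensive.
Import GRing.Theory.
Local Open Scope ring_scope.

(* The whole argument happens in the abelianisation.  The commutative algebra
   F[a]/(p) (x) F[b]/(q), built as (F[t]/(p))[s]/(q), receives a morphism from
   W_{p,q} under which 1, a, b stay linearly independent.  Conjugation becomes
   trivial there, and since p and q are quadratic every basic vector is an
   affine combination of 1, a and b; so x and gamma x gamma^-1 have the same
   coordinates, hence are equal. *)

Section RestrictScalars.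
Variables (F : pzRingType) (R : comAlgType F) (V : comAlgType R).

Definition restrict_scalars : Type := V.
HB.instance Definition _ := GRing.ComNzRing.on restrict_scalars.

Definition restrict_scale (k : F) (v : restrict_scalars) : restrict_scalars :=
  (k%:A : R) *: (v : V).

Fact restrict_scaleA k l v :
  restrict_scale k (restrict_scale l v) = restrict_scale (k * l) v.
Proof. by rewrite /restrict_scale scalerA mulr_algl scalerA. Qed.

Fact restrict_scale1 : left_id 1 restrict_scale.
Proof. by move=> v; rewrite /restrict_scale !scale1r. Qed.

Fact restrict_scaleDr : right_distributive restrict_scale +%R.
Proof. by move=> k u v; rewrite /restrict_scale scalerDr. Qed.

Fact restrict_scaleDl v : {morph restrict_scale^~ v : k l / k + l}.
Proof. by move=> k l; rewrite /restrict_scale !scalerDl. Qed.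

HB.instance Definition _ := GRing.Zmodule_isLmodule.Build F restrict_scalars
  restrict_scaleA restrict_scale1 restrict_scaleDr restrict_scaleDl.

Fact restrict_scaleAl k (u v : restrict_scalars) :
  k *: (u * v) = (k *: u) * v.
Proof. exact: scalerAl. Qed.

HB.instance Definition _ := GRing.Lmodule_isLalgebra.Build F restrict_scalars
  restrict_scaleAl.
HB.instance Definition _ := GRing.Lalgebra_isComAlgebra.Build F restrict_scalars.

Lemma restrict_scalarsZ k (v : restrict_scalars) : k *: v = (k%:A : R) *: (v : V).
Proof. by []. Qed.

End RestrictScalars.
Arguments restrict_scalars {F} R V.

Lemma peval_restrict (F : fieldType) (R : comAlgType F) (V : comAlgType R)
  (r : {poly F}) (v : restrict_scalars R V) :
  peval r v = horner_alg (v : V) (map_poly (in_alg R) r).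
Proof. by rewrite /peval /horner_alg /horner_morph -map_poly_comp. Qed.

Section QpolyGenerator.
Variables (A : comNzRingType) (h : {poly A}).
Hypothesis h_monic : h \is monic.

Lemma horner_alg_qX (r : {poly A}) : horner_alg ('qX : {poly %/ h}) r = in_qpoly h r.
Proof.
elim/poly_ind: r => [|r c IHr]; first by rewrite !rmorph0.
rewrite !rmorphD !rmorphM /= IHr horner_algX horner_algC.
by rewrite -alg_polyC in_qpolyZ in_qpoly1.
Qed.

Lemma horner_alg_qX_root : (1 < size h)%N -> horner_alg ('qX : {poly %/ h}) h = 0.
Proof.
move=> h_gt1; rewrite horner_alg_qX; apply: val_inj.
by rewrite /= /mk_monic h_gt1 h_monic Pdiv.RingMonic.rmodpp.
Qed.

Lemma qpoly_affine_inj (c0 c1 e0 e1 : A) : (2 < size h)%N ->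
  c0%:A + c1 *: 'qX = e0%:A + e1 *: 'qX :> {poly %/ h} -> c0 = e0 /\ c1 = e1.
Proof.
move=> h_gt2 /(congr1 (fun r : {poly %/ h} => r : {poly A})).
rewrite !poly_of_qpolyD !poly_of_qpolyZ qpolyXE // => E.
by split; [move: (congr1 (coefp 0) E) | move: (congr1 (coefp 1) E)];
  rewrite /= !coefD !coefZ !coef1 !coefX /= ?mulr0 ?mulr1 ?addr0 ?add0r.
Qed.

End QpolyGenerator.

Section TensorModel.
Variables (F : fieldType) (p q : {poly F}).
Hypotheses (p_monic : p \is monic) (q_monic : q \is monic).
Hypotheses (p_gt2 : (2 < size p)%N) (q_gt2 : (2 < size q)%N).

Local Notation R := {poly %/ p}.
Local Notation qR := (map_poly (in_alg R) q).
Local Notation V := {poly %/ qR}.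
Local Notation T := (restrict_scalars R V).

Definition tensor_a : T := ('qX : R)%:A.
Definition tensor_b : T := 'qX.

Lemma peval_tensor_a : peval p tensor_a = 0.
Proof.
rewrite peval_restrict /tensor_a /horner_alg /horner_morph.
rewrite -in_algE horner_map -[_.['qX]]/(horner_alg 'qX p).
by rewrite horner_alg_qX_root ?rmorph0 // (ltn_trans _ p_gt2).
Qed.

Lemma peval_tensor_b : peval q tensor_b = 0.
Proof.
rewrite peval_restrict horner_alg_qX_root ?map_monic //.
by rewrite size_map_poly (ltn_trans _ q_gt2).
Qed.

Lemma tensor_span (c0 c1 c2 : F) :
  c0%:A + c1 *: tensor_a + c2 *: tensor_b = (c0%:A + c1 *: 'qX)%:A + c2%:A *: 'qX :> V.
Proof. by rewrite !restrict_scalarsZ scalerDl /tensor_a scalerA mulr_algl. Qed.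

Lemma tensor_coord_inj (c0 c1 c2 e0 e1 e2 : F) :
  c0%:A + c1 *: tensor_a + c2 *: tensor_b = e0%:A + e1 *: tensor_a + e2 *: tensor_b ->
  [/\ c0 = e0, c1 = e1 & c2 = e2].
Proof.
rewrite !tensor_span.
case/qpoly_affine_inj; rewrite ?map_monic ?size_map_poly //.
by case/qpoly_affine_inj => // -> -> /(fmorph_inj (in_alg R)) ->.
Qed.

End TensorModel.

Lemma in_Fx_quadratic (F : fieldType) (A : algType F) (p : {poly F}) (u y : A) :
  size p = 3%N -> peval p u = 0 -> in_Fx u y -> exists c0 c1 : F, y = c0%:A + c1 *: u.
Proof.
move=> size_p pu [r ->]; set s := r %% p.
have : (size s < size p)%N by rewrite ltn_modp -size_poly_gt0 size_p.
rewrite size_p ltnS => size_s.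
have -> : peval r u = horner_alg u s.
  change (horner_alg u r = horner_alg u s).
  by rewrite [in LHS](divp_eq r p) rmorphD rmorphM /= [horner_alg u p]pu mulr0 add0r.
have -> : s = (s`_0)%:P + s`_1 *: 'X.
  apply/polyP => -[|[|i]];
    rewrite coefD coefC coefZ coefX /= ?mulr0 ?mulr1 ?addr0 ?add0r //.
  by rewrite nth_default // (leq_trans size_s).
exists s`_0, s`_1.
by rewrite rmorphD /= linearZ /= horner_algC horner_algX mulr_algl.
Qed.

Lemma basic_span (F : fieldType) (p q : {poly F}) (A : algType F) (a b y : A) :
    size p = 3%N -> size q = 3%N -> peval p a = 0 -> peval q b = 0 ->
  basic a b y -> exists c0 c1 c2 : F, y = c0%:A + c1 *: a + c2 *: b.
Proof.
move=> size_p size_q pa qb.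
case=> [/(in_Fx_quadratic size_p pa) | /(in_Fx_quadratic size_q qb)] [c0 [c1 ->]].
  by exists c0, c1, 0; rewrite scale0r addr0.
by exists c0, 0, c1; rewrite scale0r addr0.
Qed.

Lemma rmorph_conj_comm (A : pzRingType) (C : comPzRingType) (f : {rmorphism A -> C})
    (g g' x : A) :
  g * g' = 1 -> f (g * x * g') = f x.
Proof. by move=> gg'; rewrite !rmorphM mulrAC -rmorphM gg' rmorph1 mul1r. Qed.

Theorem mainTheorem14 (F : fieldType) (p q : {poly F})
  (hp : p \is monic) (hp2 : size p = 3%N) (hq : q \is monic) (hq2 : size q = 3%N)
  (A : algType F) (a b : A) (hW : @is_Wpq F p q A a b)
  (gamma gamma' : A) (hg1 : gamma * gamma' = 1) (hg2 : gamma' * gamma = 1)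
  (x : A) (hx : basic a b x) (hxns : ~ is_scalar x)
  (hconj : basic a b (gamma * x * gamma')) :
  gamma * x * gamma' = x.
Proof.
have p_gt2 : (2 < size p)%N by rewrite hp2.
have q_gt2 : (2 < size q)%N by rewrite hq2.
case: hW => pa [qb /(_ _ _ _ (peval_tensor_a q hp p_gt2) (peval_tensor_b p hq q_gt2))].
case=> f [fa fb _].
have [c0 [c1 [c2 Ex]]] := basic_span hp2 hq2 pa qb hx.
have [e0 [e1 [e2 Ey]]] := basic_span hp2 hq2 pa qb hconj.
have := rmorph_conj_comm f x hg1.
rewrite Ey Ex !rmorphD /= !linearZ /= rmorph1 fa fb.
by case/(tensor_coord_inj hp hq p_gt2 q_gt2) => -> -> ->.
Qed.
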